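(* Let $R$ be an integral domain. Then the image $\overline{\mathbf{U}_4(R)}=\mathbf{U}_4(R)/\mathbf{U}_4(R)'$ is a characteristic subgroup of $\overline{\mathbf{A}_4(R)}=\mathbf{A}_4(R)/\mathbf{U}_4(R)'$.
   Context: $\mathbf{A}_4(R)$ is the group of upper triangular $4\times4$ matrices over $R$ whose diagonal has the form $(1,u_2,u_3,1)$ with $u_2,u_3\in U(R)$. $\mathbf{U}_4(R)$ is its normal subgroup of upper unitriangular matrices and $\mathbf{U}_4(R)'=[\mathbf{U}_4(R),\mathbf{U}_4(R)]$. *)

From HB Require Import structures.
From mathcomp Require Import all_boot all_order all_algebra.
Set Implicit Arguments. Unset Strict Implicit. Unset Printing Implicit Defensive.
Import GRing.Theory.
Local Open Scope ring_scope.

(* Groups inside the unit group of the matrix ring 'M[R]_4; group law = matrix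
   product, inverse = ring inverse (invmx on invertible matrices). *)

Definition is_A4 (R : idomainType) (M : 'M[R]_4) : Prop :=
  (forall i j : 'I_4, (j < i)%N -> M i j = 0) /\
  (forall i : 'I_4, if (val i == 0%N) || (val i == 3%N) then M i i = 1
                    else M i i \is a GRing.unit).

Definition is_U4 (R : idomainType) (M : 'M[R]_4) : Prop :=
  (forall i j : 'I_4, (j < i)%N -> M i j = 0) /\ (forall i : 'I_4, M i i = 1).

Inductive in_U4' (R : idomainType) : 'M[R]_4 -> Prop :=
  | U4'_comm x y : is_U4 x -> is_U4 y -> in_U4' (x^-1 * y^-1 * x * y)
  | U4'_one : in_U4' 1
  | U4'_mul a b : in_U4' a -> in_U4' b -> in_U4' (a * b)
  | U4'_inv a : in_U4' a -> in_U4' a^-1.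

Definition congU4' (R : idomainType) (x y : 'M[R]_4) : Prop := in_U4' (x^-1 * y).

(* An automorphism of the quotient group A_4(R)/U_4(R)', presented through a
   lift f : A_4(R) -> A_4(R) on representatives: f is well defined and
   injective on cosets, multiplicative modulo U_4(R)', and surjective on
   cosets. Every automorphism of the quotient arises this way (choose a
   representative of the image of each coset) and every such f induces one. *)
Definition quot_aut_A4 (R : idomainType) (f : 'M[R]_4 -> 'M[R]_4) : Prop :=
  [/\ (forall x, is_A4 x -> is_A4 (f x)),
      (forall x y, is_A4 x -> is_A4 y -> (congU4' x y <-> congU4' (f x) (f y))),
      (forall x y, is_A4 x -> is_A4 y -> congU4' (f (x * y)) (f x * f y))
    & (forall y, is_A4 y -> exists2 x, is_A4 x & congU4' (f x) y)].

From HB Require Import structures.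
From mathcomp Require Import all_boot all_order all_algebra.
From mathcomp Require Import ring.
Set Implicit Arguments. Unset Strict Implicit. Unset Printing Implicit Defensive.
Import GRing.Theory.
Local Open Scope ring_scope.

(** Every element of U_4(R)' is unitriangular with zero superdiagonal, so
    congruence modulo U_4(R)' preserves the diagonal and the superdiagonal.
    Call x in A_4(R) conjugate-commuting when its class commutes with all its
    conjugates in A_4(R)/U_4(R)'; this property is intrinsic to the quotient group,
    hence preserved by its automorphisms.  Elements of U_4(R) have it, as
    U_4(R)/U_4(R)' is abelian and normal.  Conversely, comparing superdiagonal
    entries of x and of its conjugate by the transvection 1 + e_(i,i+1) gives
    (x_ii - x_(i+1,i+1))^2 = 0, so over a domain all diagonal entries of x equal
    x_00 = 1 and x lies in U_4(R). *)

Section UpperTriangular.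
Variables (R : comUnitRingType) (n : nat).
Implicit Types M N : 'M[R]_n.+1.

Definition upper_trig M := forall i j : 'I_n.+1, (j < i)%N -> M i j = 0.

Lemma utrig_mul M N : upper_trig M -> upper_trig N -> upper_trig (M * N).
Proof.
move=> uM uN i j lt_ji; rewrite -mulmxE mxE big1 // => k _.
case: (ltnP k i) => [lt_ki|le_ik]; first by rewrite uM ?mul0r.
by rewrite uN ?mulr0 // (leq_trans lt_ji).
Qed.

Lemma mulmx_utrig_diag M N i : upper_trig M -> upper_trig N ->
  (M * N) i i = M i i * N i i.
Proof.
move=> uM uN; rewrite -mulmxE mxE (bigD1 i) //= big1 ?addr0 // => k neq_ki.
case: (ltngtP k i) => [lt_ki|lt_ik|/val_inj eq_ki]; first by rewrite uM ?mul0r.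
  by rewrite uN ?mulr0.
by rewrite eq_ki eqxx in neq_ki.
Qed.

Lemma mulmx_utrig_superdiag M N (i j : 'I_n.+1) : upper_trig M -> upper_trig N ->
  j = i.+1 :> nat -> (M * N) i j = M i i * N i j + M i j * N j j.
Proof.
move=> uM uN eq_j; have neq_ij : i != j by rewrite -val_eqE /= eq_j neq_ltn ltnSn.
rewrite -mulmxE mxE (bigD1 i) // (bigD1 j) 1?eq_sym //= big1 ?addr0 ?addrA // => k.
rewrite -!val_eqE /= => /andP[neq_ki neq_kj].
case: (ltngtP k i) => [lt_ki|lt_ik|eq_ki]; first by rewrite uM ?mul0r.
  by rewrite uN ?mulr0 // ltn_neqAle eq_sym neq_kj eq_j.
by rewrite eq_ki eqxx in neq_ki.
Qed.

Lemma utrig_unit M : upper_trig M -> (forall i, M i i \is a GRing.unit) ->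
  M \is a GRing.unit.
Proof.
move=> uM unit_diag; rewrite [_ \is a _]unitmxE -det_tr det_trig.
  by apply/rpred_prod => i _; rewrite mxE.
by apply/is_trig_mxP => i j lt_ij; rewrite mxE uM.
Qed.

Section Inverse.
Variable M : 'M[R]_n.+1.
Hypotheses (uM : upper_trig M) (unit_diag : forall i, M i i \is a GRing.unit).

Let mulVM : M^-1 * M = 1.
Proof. by rewrite mulVr // utrig_unit. Qed.

Lemma utrig_inv : upper_trig M^-1.
Proof.
suff IH m (i j : 'I_n.+1) : (j < m)%N -> (j < i)%N -> M^-1 i j = 0.
  by move=> i j; apply: (IH j.+1).
elim: m i j => // m IHm i j lt_jm lt_ji.
have : (M^-1 * M) i j = 0 by rewrite mulVM mxE -val_eqE /= gtn_eqF.
rewrite -mulmxE mxE (bigD1 j) //= big1 ?addr0 => [|k neq_kj].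
  by move/(congr1 ( *%R^~ (M j j)^-1)); rewrite mulrK // mul0r.
case: (ltngtP k j) => [lt_kj|lt_jk|/val_inj eq_kj]; last by rewrite eq_kj eqxx in neq_kj.
  by rewrite (IHm _ _ (leq_trans lt_kj _) (ltn_trans lt_kj _)) ?mul0r.
by rewrite uM ?mulr0.
Qed.

Lemma utrig_inv_diag i : M^-1 i i = (M i i)^-1.
Proof.
have : (M^-1 * M) i i = 1 by rewrite mulVM mxE eqxx.
rewrite mulmx_utrig_diag //; last exact: utrig_inv.
by move/(congr1 ( *%R^~ (M i i)^-1)); rewrite mulrK // mul1r.
Qed.

Lemma unitrig_inv_superdiag (i j : 'I_n.+1) : (forall k, M k k = 1) -> j = i.+1 :> nat ->
  M^-1 i j = - M i j.
Proof.
move=> diag1 eq_j; have : (M^-1 * M) i j = 0.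
  by rewrite mulVM mxE -val_eqE /= eq_j (ltn_eqF (ltnSn i)).
rewrite mulmx_utrig_superdiag //; last exact: utrig_inv.
by rewrite !utrig_inv_diag !diag1 invr1 mulr1 mul1r addrC => /eqP; rewrite addr_eq0 => /eqP.
Qed.

End Inverse.
End UpperTriangular.

Lemma mx_diag_const (T : Type) n (M : 'M[T]_n.+1) :
  (forall i j : 'I_n.+1, j = i.+1 :> nat -> M i i = M j j) ->
  forall i, M i i = M ord0 ord0.
Proof.
move=> diag_step [m]; elim: m => [|m IHm] lt_m; first by congr (M _ _); apply: val_inj.
by rewrite -(diag_step (Ordinal (ltnW lt_m))) ?IHm.
Qed.

Section Transvection.
Variables (R : idomainType) (n : nat).
Implicit Types x y : 'M[R]_n.+1.

Definition transvection (i j : 'I_n.+1) : 'M[R]_n.+1 := 1 + delta_mx i j.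

Lemma utrig_transvection (i j : 'I_n.+1) : (i < j)%N -> upper_trig (transvection i j).
Proof.
move=> lt_ij a b lt_ba; rewrite /transvection !mxE -val_eqE /= gtn_eqF //.
case: eqP => [eq_ai | _]; case: eqP => [eq_bj | _] //=; rewrite ?addr0 //.
by move: lt_ba; rewrite eq_ai eq_bj ltnNge ltnW.
Qed.

Lemma commute_transvection_conj_diag x y (i j : 'I_n.+1) :
  upper_trig x -> upper_trig y -> j = i.+1 :> nat ->
  transvection i j * y = x * transvection i j ->
  (x * y) i j = (y * x) i j -> x i i = x j j.
Proof.
move=> ux uy eq_j wy_xw comm.
have lt_ij : (i < j)%N by rewrite eq_j.
have neq_ji : j != i by rewrite -val_eqE /= gtn_eqF.
have uw := utrig_transvection lt_ij.
have [w_ii w_jj w_ij] : [/\ transvection i j i i = 1,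
    transvection i j j j = 1 & transvection i j i j = 1].
  by rewrite !mxE !eqxx (negPf neq_ji) -val_eqE /= ltn_eqF ?addr0 ?add0r.
have entry k l := congr1 (fun M : 'M[R]_n.+1 => M k l) wy_xw.
have y_ii : y i i = x i i.
  by move: (entry i i); rewrite /= !mulmx_utrig_diag // w_ii mul1r mulr1.
have y_jj : y j j = x j j.
  by move: (entry j j); rewrite /= !mulmx_utrig_diag // w_jj mul1r mulr1.
have y_ij : y i j = x i i + x i j - x j j.
  move: (entry i j); rewrite /= !mulmx_utrig_superdiag // w_ii w_jj w_ij y_jj.
  by rewrite !mul1r !mulr1 => <-; ring.
move: comm; rewrite !mulmx_utrig_superdiag // y_ii y_jj y_ij => /eqP.
rewrite -subr_eq0 => /eqP comm.
have : (x i i - x j j) ^+ 2 = 0 by rewrite -comm; ring.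
by move/eqP; rewrite expf_eq0 /= subr_eq0 => /eqP.
Qed.

End Transvection.
Arguments transvection {R n}.

Section Conjugation.
Variable R : unitRingType.
Implicit Types a b g : R.

Lemma conjrM g a b : g \is a GRing.unit ->
  g^-1 * (a * b) * g = (g^-1 * a * g) * (g^-1 * b * g).
Proof. by move=> ug; rewrite !mulrA mulrK. Qed.

Lemma conjrV g a : g \is a GRing.unit -> a \is a GRing.unit ->
  g^-1 * a^-1 * g = (g^-1 * a * g)^-1.
Proof. by move=> ug ua; rewrite !invrM ?unitrMl ?unitrMr ?unitrV // invrK mulrA. Qed.

End Conjugation.

Section UnitriangularGroup.
Variable R : idomainType.
Implicit Types g m x y : 'M[R]_4.

Lemma A4_utrig x : is_A4 x -> upper_trig x. Proof. by case. Qed.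

Lemma A4_diag_unit x : is_A4 x -> forall i, x i i \is a GRing.unit.
Proof. by case=> _ dx i; move: (dx i); case: ifP => // _ ->; rewrite unitr1. Qed.

Lemma A4_unit x : is_A4 x -> x \is a GRing.unit.
Proof. by move=> Ax; exact: utrig_unit (A4_utrig Ax) (A4_diag_unit Ax). Qed.

Lemma A4_mul x y : is_A4 x -> is_A4 y -> is_A4 (x * y).
Proof.
move=> Ax Ay; split=> [|i]; first exact: utrig_mul (A4_utrig Ax) (A4_utrig Ay).
rewrite (mulmx_utrig_diag _ (A4_utrig Ax) (A4_utrig Ay)).
have := Ax.2 i; have := Ay.2 i.
by case: ifP => _ => [-> -> | uy ux]; rewrite ?mulr1 ?unitrM ?ux.
Qed.

Lemma A4_inv x : is_A4 x -> is_A4 x^-1.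
Proof.
move=> Ax; have [ux dx] := (A4_utrig Ax, A4_diag_unit Ax).
split=> [|i]; first exact: utrig_inv.
rewrite utrig_inv_diag //; have := Ax.2 i.
by case: ifP => _ => [-> | uxi]; rewrite ?invr1 ?unitrV.
Qed.

Lemma U4_A4 x : is_U4 x -> is_A4 x.
Proof. by case=> ux dx; split=> // i; rewrite dx; case: ifP; rewrite ?unitr1. Qed.

Lemma U4_unit x : is_U4 x -> x \is a GRing.unit.
Proof. by move/U4_A4/A4_unit. Qed.

Lemma U4_1 : is_U4 (1 : 'M[R]_4).
Proof. by split=> [i j lt_ji | i]; rewrite mxE -val_eqE /= ?eqxx ?gtn_eqF. Qed.

Lemma U4_mul x y : is_U4 x -> is_U4 y -> is_U4 (x * y).
Proof.
move=> [ux dx] [uy dy]; split=> [|i]; first exact: utrig_mul.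
by rewrite mulmx_utrig_diag // dx dy mulr1.
Qed.

Lemma U4_inv x : is_U4 x -> is_U4 x^-1.
Proof.
move=> Ux; have [ux dx] := Ux; have unit_dx := A4_diag_unit (U4_A4 Ux).
by split=> [|i]; [exact: utrig_inv | rewrite utrig_inv_diag // dx invr1].
Qed.

Lemma U4_conj g x : is_A4 g -> is_U4 x -> is_U4 (g^-1 * x * g).
Proof.
move=> Ag [ux dx]; have [ug dg] := (A4_utrig Ag, A4_diag_unit Ag).
have ugV : upper_trig g^-1 by exact: utrig_inv.
split=> [|i]; first by do 2?apply: utrig_mul.
rewrite !mulmx_utrig_diag //; last exact: utrig_mul.
by rewrite (utrig_inv_diag ug dg) dx mulr1 mulVr.
Qed.

Lemma U4_mul_superdiag x y (i j : 'I_4) : is_U4 x -> is_U4 y -> j = i.+1 :> nat ->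
  (x * y) i j = x i j + y i j.
Proof.
by move=> [ux dx] [uy dy] eq_j; rewrite mulmx_utrig_superdiag // dx dy mul1r mulr1 addrC.
Qed.

Lemma U4_inv_superdiag x (i j : 'I_4) : is_U4 x -> j = i.+1 :> nat -> x^-1 i j = - x i j.
Proof.
move=> Ux; have [ux dx] := Ux.
exact: unitrig_inv_superdiag ux (A4_diag_unit (U4_A4 Ux)) i j dx.
Qed.

Lemma U4_transvection (i j : 'I_4) : (i < j)%N -> is_U4 (transvection i j : 'M[R]_4).
Proof.
move=> lt_ij; split=> [|k]; first exact: utrig_transvection.
rewrite /transvection !mxE eqxx; case: eqP => [-> | _]; rewrite ?andbF ?addr0 //.
by rewrite -val_eqE /= (ltn_eqF lt_ij) addr0.
Qed.

End UnitriangularGroup.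

Section DerivedSubgroup.
Variable R : idomainType.
Implicit Types g m x y : 'M[R]_4.

Lemma in_U4'_superdiag0 m : in_U4' m ->
  is_U4 m /\ forall i j : 'I_4, j = i.+1 :> nat -> m i j = 0.
Proof.
elim=> {m} [x y Ux Uy | | a b _ [Ua a0] _ [Ub b0] | a _ [Ua a0]].
- have [Ux' Uy'] := (U4_inv Ux, U4_inv Uy).
  have Uxy' := U4_mul Ux' Uy'; have Uxy'x := U4_mul Uxy' Ux.
  split=> [|i j eq_j]; first exact: U4_mul.
  rewrite !U4_mul_superdiag // !U4_inv_superdiag //; ring.
- by split=> [|i j eq_j]; rewrite ?mxE -?val_eqE /= ?eq_j ?ltn_eqF //; exact: U4_1.
- split=> [|i j eq_j]; first exact: U4_mul.
  by rewrite U4_mul_superdiag // a0 ?b0 ?addr0.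
- split=> [|i j eq_j]; first exact: U4_inv.
  by rewrite U4_inv_superdiag // a0 ?oppr0.
Qed.

Lemma in_U4'_conj g m : is_A4 g -> in_U4' m -> in_U4' (g^-1 * m * g).
Proof.
move=> Ag; have ug := A4_unit Ag.
elim=> {m} [x y Ux Uy | | a b _ IHa _ IHb | a Ua IHa].
- rewrite !conjrM // (conjrV ug (U4_unit Ux)) (conjrV ug (U4_unit Uy)).
  by apply: U4'_comm; apply: U4_conj.
- by rewrite mulr1 mulVr //; apply: U4'_one.
- by rewrite conjrM //; apply: U4'_mul.
- rewrite conjrV //; first exact: U4'_inv.
  exact/U4_unit/(in_U4'_superdiag0 Ua).1.
Qed.

Lemma congU4'_refl x : is_A4 x -> congU4' x x.
Proof. by move=> Ax; rewrite /congU4' mulVr ?A4_unit //; apply: U4'_one. Qed.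

Lemma congU4'_sym x y : is_A4 x -> is_A4 y -> congU4' x y -> congU4' y x.
Proof.
move=> Ax Ay xy; rewrite /congU4'.
by rewrite -[x]invrK -invrM ?unitrV ?A4_unit //; apply: U4'_inv.
Qed.

Lemma congU4'_trans y x z : is_A4 y -> congU4' x y -> congU4' y z -> congU4' x z.
Proof.
move=> Ay xy yz; rewrite /congU4'.
by rewrite -(mulrK (A4_unit Ay) x^-1) -mulrA; apply: U4'_mul.
Qed.

Lemma congU4'_mul x x' y y' : is_A4 x -> is_A4 y ->
  congU4' x x' -> congU4' y y' -> congU4' (x * y) (x' * y').
Proof.
move=> Ax Ay xx' yy'; rewrite /congU4' invrM ?A4_unit //.
have -> : y^-1 * x^-1 * (x' * y') = (y^-1 * (x^-1 * x') * y) * (y^-1 * y').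
  by rewrite !mulrA mulrK ?A4_unit.
by apply: U4'_mul => //; apply: in_U4'_conj.
Qed.

Lemma congU4'_mul2l w x y : is_A4 w -> is_A4 x ->
  congU4' (w * x) (w * y) <-> congU4' x y.
Proof.
move=> Aw Ax; rewrite /congU4' invrM ?A4_unit //.
by rewrite -mulrA (mulrA w^-1) mulVr ?A4_unit // mul1r.
Qed.

Lemma congU4'_diag x y i : is_A4 x -> congU4' x y -> y i i = x i i.
Proof.
move=> Ax /in_U4'_superdiag0[[um dm] _].
have -> : y = x * (x^-1 * y) by rewrite mulrA mulrV ?mul1r ?A4_unit.
by rewrite (mulmx_utrig_diag _ (A4_utrig Ax) um) dm mulr1.
Qed.

Lemma congU4'_superdiag x y (i j : 'I_4) : is_A4 x -> congU4' x y ->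
  j = i.+1 :> nat -> y i j = x i j.
Proof.
move=> Ax /in_U4'_superdiag0[[um dm] m0] eq_j.
have -> : y = x * (x^-1 * y) by rewrite mulrA mulrV ?mul1r ?A4_unit.
by rewrite (mulmx_utrig_superdiag (A4_utrig Ax) um eq_j) m0 // dm mulr0 mulr1 add0r.
Qed.

Lemma U4_commute_mod x y : is_U4 x -> is_U4 y -> congU4' (x * y) (y * x).
Proof.
move=> Ux Uy; rewrite /congU4' invrM ?U4_unit // !mulrA.
exact: U4'_comm.
Qed.

End DerivedSubgroup.

Section Characterisation.
Variable R : idomainType.
Implicit Types w x y : 'M[R]_4.

(* [y] plays the role of the conjugate [w^-1 x w], determined modulo U_4(R)'. *)
Definition commutes_with_conjugates x := forall w y, is_A4 w -> is_A4 y ->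
  congU4' (w * y) (x * w) -> congU4' (x * y) (y * x).

Lemma U4_commutes_with_conjugates x : is_U4 x -> commutes_with_conjugates x.
Proof.
move=> Ux w y Aw Ay wy_xw; apply: U4_commute_mod => //.
split=> [|i]; first exact: A4_utrig.
have := congU4'_diag i (A4_mul Aw Ay) wy_xw.
have [uw uy] := (A4_utrig Aw, A4_utrig Ay).
rewrite (mulmx_utrig_diag _ Ux.1 uw) (mulmx_utrig_diag _ uw uy) Ux.2 mul1r => e.
by apply: (mulrI (A4_diag_unit Aw i)); rewrite -e mulr1.
Qed.

Lemma commutes_with_conjugates_U4 x : is_A4 x -> commutes_with_conjugates x -> is_U4 x.
Proof.
move=> Ax cx; split=> [|i]; first exact: A4_utrig.
rewrite (mx_diag_const _ i); first by have := Ax.2 ord0.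
move=> {}i j eq_j; have lt_ij : (i < j)%N by rewrite eq_j.
have Aw : is_A4 (transvection i j : 'M[R]_4) by exact/U4_A4/U4_transvection.
set w := transvection i j in Aw *; have uw := A4_unit Aw; set y := w^-1 * x * w.
have Ay : is_A4 y by apply: A4_mul => //; apply: A4_mul => //; apply: A4_inv.
have wy_xw : w * y = x * w by rewrite /y !mulrA mulrV ?mul1r.
have xy_yx : congU4' (x * y) (y * x).
  by apply: (cx w) => //; rewrite wy_xw; exact: congU4'_refl (A4_mul Ax Aw).
apply: (commute_transvection_conj_diag (A4_utrig Ax) (A4_utrig Ay) eq_j wy_xw).
by rewrite (congU4'_superdiag (A4_mul Ax Ay) xy_yx eq_j).
Qed.

Lemma U4_iff_commutes_with_conjugates x : is_A4 x ->
  is_U4 x <-> commutes_with_conjugates x.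
Proof.
move=> Ax; split; first exact: U4_commutes_with_conjugates.
exact: commutes_with_conjugates_U4.
Qed.

End Characterisation.

Section Automorphism.
Variables (R : idomainType) (f : 'M[R]_4 -> 'M[R]_4).
Hypothesis aut_f : quot_aut_A4 f.

Let A4_f x : is_A4 x -> is_A4 (f x). Proof. by case: aut_f => A4f _ _ _; apply: A4f. Qed.
Let f_cong x y : is_A4 x -> is_A4 y -> congU4' x y <-> congU4' (f x) (f y).
Proof. by case: aut_f => _ fc _ _; apply: fc. Qed.
Let f_mul x y : is_A4 x -> is_A4 y -> congU4' (f (x * y)) (f x * f y).
Proof. by case: aut_f => _ _ fm _; apply: fm. Qed.
Let f_surj y : is_A4 y -> exists2 x, is_A4 x & congU4' (f x) y.
Proof. by case: aut_f => _ _ _ fs; apply: fs. Qed.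

Lemma aut_mul_cong a b c d : is_A4 a -> is_A4 b -> is_A4 c -> is_A4 d ->
  congU4' (a * b) (c * d) <-> congU4' (f a * f b) (f c * f d).
Proof.
move=> Aa Ab Ac Ad; have [Aab Acd] := (A4_mul Aa Ab, A4_mul Ac Ad).
have [Afab Afcd] := (A4_mul (A4_f Aa) (A4_f Ab), A4_mul (A4_f Ac) (A4_f Ad)).
have fab := f_mul Aa Ab; have fcd := f_mul Ac Ad.
rewrite (f_cong Aab Acd); split=> [fab_fcd | fafb_fcfd].
- apply: congU4'_trans (A4_f Aab) (congU4'_sym (A4_f Aab) Afab fab) _.
  exact: congU4'_trans (A4_f Acd) fab_fcd fcd.
- apply: congU4'_trans Afab fab _.
  exact: congU4'_trans Afcd fafb_fcfd (congU4'_sym (A4_f Acd) Afcd fcd).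
Qed.

Lemma commutes_with_conjugates_aut x : is_A4 x ->
  commutes_with_conjugates x <-> commutes_with_conjugates (f x).
Proof.
move=> Ax; have Afx := A4_f Ax.
split=> [cx w y Aw Ay wy_fxw | cfx w y Aw Ay wy_xw]; last first.
  apply/(aut_mul_cong Ax Ay Ay Ax); apply: (cfx (f w) (f y) (A4_f Aw) (A4_f Ay)).
  exact/(aut_mul_cong Aw Ay Ax Aw).
have [b Ab fb_w] := f_surj Aw; have Afb := A4_f Ab.
set c := b^-1 * x * b; have Ac : is_A4 c := A4_mul (A4_mul (A4_inv Ab) Ax) Ab.
have Afc := A4_f Ac.
have xc_cx : congU4' (f x * f c) (f c * f x).
  apply/(aut_mul_cong Ax Ac Ac Ax); apply: (cx b) => //.
  by rewrite /c !mulrA mulrV ?mul1r ?A4_unit //; exact: congU4'_refl (A4_mul Ax Ab).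
have fc_y : congU4' (f c) y.
  apply/(congU4'_mul2l _ Aw Afc).
  apply: congU4'_trans (A4_mul Afb Afc) _ _.
    exact: congU4'_mul Aw Afc (congU4'_sym Afb Aw fb_w) (congU4'_refl Afc).
  apply: congU4'_trans (A4_mul Afx Afb) _ _.
    apply/(aut_mul_cong Ab Ac Ax Ab); rewrite /c !mulrA mulrV ?mul1r ?A4_unit //.
    exact: congU4'_refl (A4_mul Ax Ab).
  apply: congU4'_trans (A4_mul Afx Aw) (congU4'_mul Afx Afb (congU4'_refl Afx) fb_w) _.
  exact: congU4'_sym (A4_mul Aw Ay) (A4_mul Afx Aw) wy_fxw.
have fxy_fxfc := congU4'_mul Afx Ay (congU4'_refl Afx) (congU4'_sym Afc Ay fc_y).
apply: congU4'_trans (A4_mul Afx Afc) fxy_fxfc _.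
apply: congU4'_trans (A4_mul Afc Afx) xc_cx _.
exact: congU4'_mul Afc Afx fc_y (congU4'_refl Afx).
Qed.

End Automorphism.

Theorem mainTheorem10 (R : idomainType) (f : 'M[R]_4 -> 'M[R]_4) :
  quot_aut_A4 f ->
  forall x : 'M[R]_4, is_A4 x -> (is_U4 x <-> is_U4 (f x)).
Proof.
move=> aut_f x Ax; have [A4_f _ _ _] := aut_f.
apply: iff_trans (U4_iff_commutes_with_conjugates Ax) _.
apply: iff_trans (commutes_with_conjugates_aut aut_f Ax) _.
exact: iff_sym (U4_iff_commutes_with_conjugates (A4_f x Ax)).
Qed.
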